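(* Let $\gamma,\delta>0$, let $x=(x_{ij}),y=(y_{ij})\in MS(2,\mathbb{R})$ (so $x_{21}=x_{12}$, $y_{21}=y_{12}$) with $y$ positive definite, $D:=y_{11}y_{22}-y_{12}^2$, and $p=(p_1,p_2)$, $q=(q_1,q_2)\in\mathbb{R}^2$. Let $F=(f_{ij})_{i,j=1}^5$ be the real symmetric matrix ($f_{ji}=f_{ij}$) with $f_{11}=\frac{\gamma}{D}y_{22}+\delta p_1^2$, $f_{12}=-\frac{\gamma}{D}y_{12}+\delta p_1p_2$, $f_{13}=\frac{\gamma}{D}(y_{22}x_{11}-y_{12}x_{12})-\delta q_1p_1$, $f_{14}=\frac{\gamma}{D}(y_{22}x_{12}-y_{12}x_{22})-\delta q_1p_2$, $f_{15}=-\delta p_1$, $f_{22}=\frac{\gamma}{D}y_{11}+\delta p_2^2$, $f_{23}=\frac{\gamma}{D}(-y_{12}x_{11}+y_{11}x_{12})-\delta q_2p_1$, $f_{24}=\frac{\gamma}{D}(-y_{12}x_{12}+y_{11}x_{22})-\delta q_2p_2$, $f_{25}=-\delta p_2$, $f_{33}=\frac{\gamma}{D}[(x_{11}^2+y_{11}^2)y_{22}+(x_{12}^2-y_{12}^2)y_{11}-2x_{11}x_{12}y_{12}]+\delta q_1^2$, $f_{34}=\frac{\gamma}{D}[(-x_{12}^2-x_{11}x_{22}+y_{11}y_{22}-y_{12}^2)y_{12}+x_{11}x_{12}y_{22}+x_{12}x_{22}y_{11}]+\delta q_1q_2$, $f_{35}=\delta q_1$, $f_{44}=\frac{\gamma}{D}[(x_{12}^2-y_{12}^2)y_{22}+(x_{22}^2+y_{22}^2)y_{11}-2x_{12}x_{22}y_{12}]+\delta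 q_2^2$, $f_{45}=\delta q_2$, $f_{55}=\delta$. Put $I_2:=p_2q_1-p_1q_2$, $A:=2[(x_{11}-x_{22})y_{12}-x_{12}(y_{11}-y_{22})]$ and $B:=4x_{12}^2+(x_{11}-x_{22})^2+y_{11}^2+y_{22}^2+2y_{12}^2$. Then $$ \det F=\delta\Big[\gamma^4-\gamma^3\frac{\delta I_2}{D}A-\gamma^2\frac{(\delta I_2)^2}{D}B-\gamma\frac{(\delta I_2)^3}{D}A+(\delta I_2)^4\Big]. $$
   Context: $MS(2,\mathbb{R})$ denotes real symmetric $2\times 2$ matrices. The matrix $F$ is the paper's $5\times 5$ matrix $g'_{\tilde{\mathcal{X}}^J_2}(x,y,q,p,\kappa)$ associated with the $(q,p,\kappa)$ coordinates of the extended Siegel–Jacobi upper half space of degree $2$; here it is defined directly by the listed entries. *)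

From HB Require Import structures.
From mathcomp Require Import all_boot all_order all_algebra.
Set Implicit Arguments. Unset Strict Implicit. Unset Printing Implicit Defensive.
Import Order.TTheory GRing.Theory Num.Theory.
Local Open Scope ring_scope.

Section FDef.
Variable R : realFieldType.
Variables (gamma delta x11 x12 x22 y11 y12 y22 p1 p2 q1 q2 : R).

Definition Ddet : R := y11 * y22 - y12 ^+ 2.

Definition fentry (i j : nat) : R :=
  let g := gamma / Ddet in
  match i, j with
  | 1, 1 => g * y22 + delta * p1 ^+ 2
  | 1, 2 => - g * y12 + delta * p1 * p2
  | 1, 3 => g * (y22 * x11 - y12 * x12) - delta * q1 * p1
  | 1, 4 => g * (y22 * x12 - y12 * x22) - delta * q1 * p2
  | 1, 5 => - delta * p1
  | 2, 2 => g * y11 + delta * p2 ^+ 2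
  | 2, 3 => g * (- y12 * x11 + y11 * x12) - delta * q2 * p1
  | 2, 4 => g * (- y12 * x12 + y11 * x22) - delta * q2 * p2
  | 2, 5 => - delta * p2
  | 3, 3 => g * ((x11 ^+ 2 + y11 ^+ 2) * y22 + (x12 ^+ 2 - y12 ^+ 2) * y11
                  - 2 * x11 * x12 * y12) + delta * q1 ^+ 2
  | 3, 4 => g * ((- x12 ^+ 2 - x11 * x22 + y11 * y22 - y12 ^+ 2) * y12
                  + x11 * x12 * y22 + x12 * x22 * y11) + delta * q1 * q2
  | 3, 5 => delta * q1
  | 4, 4 => g * ((x12 ^+ 2 - y12 ^+ 2) * y22 + (x22 ^+ 2 + y22 ^+ 2) * y11
                  - 2 * x12 * x22 * y12) + delta * q2 ^+ 2
  | 4, 5 => delta * q2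
  | 5, 5 => delta
  | _, _ => 0
  end.

Definition Fmat : 'M[R]_5 :=
  \matrix_(i < 5, j < 5)
    if (i <= j)%N then fentry i.+1 j.+1 else fentry j.+1 i.+1.

End FDef.

(** Eliminating the last coordinate with the pivot [delta] splits off a factor
    [delta]: [F] is a border of the 4x4 matrix
    [Fcore = gamma [[Y^-1, Y^-1 X], [X Y^-1, X Y^-1 X + Y]] + t [[0, J], [J^T, 0]]]
    by the rank-one term [delta (u, 1) (u, 1)^T], where [t = delta I2] and [J] is
    the rotation by a right angle.  Pivoting [Fcore] on its block [gamma Y^-1]
    (of determinant [gamma^2 / D]) leaves the Schur complement
    [gamma Y - t (X J + J^T X) - (t^2 / gamma) J^T Y J], a 2x2 matrix whose
    determinant times [gamma^2 / D] is the stated quartic in [gamma] and [t]. *)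

From HB Require Import structures.
From mathcomp Require Import all_boot all_order all_algebra.
From mathcomp Require Import ring.
Set Implicit Arguments. Unset Strict Implicit. Unset Printing Implicit Defensive.
Import Order.TTheory GRing.Theory Num.Theory.
Local Open Scope ring_scope.

Section BlockDeterminants.
Variable R : comPzRingType.

Definition mx22 (a b c d : R) : 'M[R]_2 :=
  \matrix_(i < 2, j < 2)
    match (i : nat), (j : nat) with
    | 0, 0 => a | 0, _ => b | _, 0 => c | _, _ => d
    end.

Lemma det_mx22 (A : 'M[R]_2) : \det A = A 0 0 * A 1 1 - A 0 1 * A 1 0.
Proof.
have lift01 : lift 0 0 = 1 :> 'I_2 by apply: val_inj.
have lift10 : lift 1 0 = 0 :> 'I_2 by apply: val_inj.
rewrite (expand_det_row _ 0) !big_ord_recl big_ord0 /cofactor !det_mx11 !mxE.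
by rewrite lift01 lift10 /=; ring.
Qed.

Lemma det_block_ul_pivot m n (A : 'M[R]_m) (U : 'M[R]_(n, m)) (V : 'M[R]_(m, n))
    (S : 'M[R]_n) :
  \det (block_mx A (A *m V) (U *m A) (S + U *m A *m V)) = \det A * \det S.
Proof.
have -> : block_mx A (A *m V) (U *m A) (S + U *m A *m V)
          = block_mx 1%:M 0 U 1%:M *m block_mx A (A *m V) 0 S.
  by rewrite mulmx_block !mul1mx !mul0mx !addr0 mulmxA addrC.
by rewrite det_mulmx det_lblock det_ublock !det1 !mul1r.
Qed.

Lemma det_block_dr_pivot m n (S : 'M[R]_m) (U : 'M[R]_(m, n)) (V : 'M[R]_(n, m))
    (A : 'M[R]_n) :
  \det (block_mx (S + U *m A *m V) (U *m A) (A *m V) A) = \det S * \det A.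
Proof.
have -> : block_mx (S + U *m A *m V) (U *m A) (A *m V) A
          = block_mx 1%:M U 0 1%:M *m block_mx S 0 (A *m V) A.
  by rewrite mulmx_block !mul1mx !mul0mx !add0r mulmxA.
by rewrite det_mulmx det_ublock det_lblock !det1 !mul1r.
Qed.

End BlockDeterminants.

Ltac mx_expand := rewrite ?(mxE, big_ord_recl, big_ord0) /=.

Section JacobiMetric.
Variable R : realFieldType.
Variables (gamma delta x11 x12 x22 y11 y12 y22 p1 p2 q1 q2 : R).

Local Notation D := (y11 * y22 - y12 ^+ 2).
Local Notation g := (gamma / D).
Local Notation t := (delta * (p2 * q1 - p1 * q2)).

Definition Ymx := mx22 y11 y12 y12 y22.
Definition Xmx := mx22 x11 x12 x12 x22.
Definition Yadj := mx22 y22 (- y12) (- y12) y11.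
Definition Jmx : 'M[R]_2 := mx22 0 (-1) 1 0.

(* [g *: Yadj] is [gamma Y^-1]. *)
Definition Fcore : 'M[R]_(2 + 2) :=
  block_mx (g *: Yadj) (g *: (Yadj *m Xmx) + t *: Jmx)
           (g *: (Xmx *m Yadj) + t *: Jmx^T)
           (g *: (Xmx *m Yadj *m Xmx) + gamma *: Ymx).

Definition uvec : 'cV[R]_4 := \col_(i < 4) [:: - p1; - p2; q1; q2]`_i.

Lemma Fmat_bordered : D != 0 ->
  Fmat gamma delta x11 x12 x22 y11 y12 y22 p1 p2 q1 q2 =
  block_mx (Fcore + uvec *m delta%:M *m uvec^T) (uvec *m delta%:M)
           (delta%:M *m uvec^T) delta%:M.
Proof.
move=> D0; apply/matrixP => i j; rewrite /Fcore /Ymx /Xmx /Yadj /Jmx /uvec.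
mx_expand; case: (@splitP 4 1 i) => i1 ->; mx_expand;
  case: (@splitP 4 1 j) => j1 ->; mx_expand.
- case: (@splitP 2 2 i1) => i2 ->; mx_expand;
    case: (@splitP 2 2 j1) => j2 ->; mx_expand;
    case: i2 => [[|[|//]] ?]; case: j2 => [[|[|//]] ?]; rewrite /Ddet /=; by field.
- by case: i1 => [[|[|[|[|//]]]] ?]; case: j1 => [[|//] ?]; rewrite /Ddet /=; ring.
- by case: j1 => [[|[|[|[|//]]]] ?]; case: i1 => [[|//] ?]; rewrite /Ddet /=; ring.
- by case: j1 => [[|//] ?]; case: i1 => [[|//] ?]; rewrite /Ddet /=; ring.
Qed.

Definition Schur : 'M[R]_2 :=
  gamma *: Ymx - t *: (Xmx *m Jmx + Jmx^T *m Xmx)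
  - (t ^+ 2 / gamma) *: (Jmx^T *m Ymx *m Jmx).
Definition Umx := Xmx + (t / gamma) *: (Jmx^T *m Ymx).
Definition Vmx := Xmx + (t / gamma) *: (Ymx *m Jmx).

Lemma Fcore_pivot : D != 0 -> gamma != 0 ->
  Fcore = block_mx (g *: Yadj) (g *: Yadj *m Vmx) (Umx *m (g *: Yadj))
                   (Schur + Umx *m (g *: Yadj) *m Vmx).
Proof.
move=> D0 g0; rewrite /Fcore /Schur /Umx /Vmx /Ymx /Xmx /Yadj /Jmx.
congr block_mx; apply/matrixP => i j; mx_expand;
  case: i => [[|[|//]] ?]; case: j => [[|[|//]] ?]; rewrite /=.
all: by field; rewrite g0 D0.
Qed.

End JacobiMetric.

Theorem mainTheorem3 (R : realFieldType)
  (gamma delta x11 x12 x22 y11 y12 y22 p1 p2 q1 q2 : R) :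
  0 < gamma -> 0 < delta ->
  (* y = [[y11, y12], [y12, y22]] positive definite *)
  0 < y11 -> 0 < y11 * y22 - y12 ^+ 2 ->
  let D := y11 * y22 - y12 ^+ 2 in
  let I2 := p2 * q1 - p1 * q2 in
  let A := 2 * ((x11 - x22) * y12 - x12 * (y11 - y22)) in
  let B := 4 * x12 ^+ 2 + (x11 - x22) ^+ 2 + y11 ^+ 2 + y22 ^+ 2
           + 2 * y12 ^+ 2 in
  \det (Fmat gamma delta x11 x12 x22 y11 y12 y22 p1 p2 q1 q2) =
  delta * (gamma ^+ 4 - gamma ^+ 3 * (delta * I2) / D * A
           - gamma ^+ 2 * (delta * I2) ^+ 2 / D * B
           - gamma * (delta * I2) ^+ 3 / D * A + (delta * I2) ^+ 4).
Proof.
move=> /lt0r_neq0 g0 _ _ /lt0r_neq0 D0 D I2 A B.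
rewrite Fmat_bordered // (@det_block_dr_pivot _ (2 + 2) 1) det_scalar1.
rewrite Fcore_pivot // det_block_ul_pivot detZ !det_mx22.
rewrite /Schur /Ymx /Xmx /Yadj /Jmx; mx_expand.
by rewrite /D /I2 /A /B; field; rewrite D0 g0.
Qed.
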